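(* Let $\beta=(\beta_n)_{n\ge0}$ be a non-increasing sequence of positive numbers with $\liminf_n\beta_n^{1/n}\ge1$, and let $I_1(z)=\exp\big(-\frac{1+z}{1-z}\big)$. If the composition operator $C_{I_1}$ maps $H^2(\beta)$ into itself, then $\beta$ satisfies the $\Delta_2$-condition.
   Context: $H^2(\beta)$ is the Hilbert space of analytic functions $f(z)=\sum_{n\ge0}a_nz^n$ on the unit disk $\mathbb D$ with $\|f\|^2=\sum_{n\ge0}|a_n|^2\beta_n<\infty$; $C_{I_1}f=f\circ I_1$. $\beta$ satisfies the $\Delta_2$-condition if there is $\delta\in(0,1)$ with $\beta_{2n}\ge\delta\beta_n$ for all $n\ge0$. *)

From Stdlib Require Import Reals.
From Coquelicot Require Import Coquelicot.
Open Scope R_scope.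

Definition Cexp (w : C) : C :=
  (exp (fst w) * cos (snd w), exp (fst w) * sin (snd w)).

Definition I1 (z : C) : C := Cexp (Copp (Cdiv (Cplus 1 z) (Cminus 1 z))).

(* coefficient sequence a of f(z) = sum a_n z^n lies in H^2(beta) *)
Definition in_H2 (beta : nat -> R) (a : nat -> C) : Prop :=
  ex_series (fun n => (Cmod (a n)) ^ 2 * beta n).

Definition pseries_at (a : nat -> C) (z : C) (v : C) : Prop :=
  @is_series C_AbsRing C_NormedModule (fun n => Cmult (a n) (Cpow z n)) v.

(* C_{I_1} maps H^2(beta) into itself: for every f = sum a_n z^n in H^2(beta),
   the function f o I_1 on the unit disk is given by a power series
   sum b_n z^n (its Taylor series) whose coefficients lie in H^2(beta). *)
Definition CI1_maps_into (beta : nat -> R) : Prop :=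
  forall a : nat -> C, in_H2 beta a ->
    exists b : nat -> C, in_H2 beta b /\
      forall z : C, Cmod z < 1 ->
        exists v : C, pseries_at a (I1 z) v /\ pseries_at b z v.

Definition Delta2 (beta : nat -> R) : Prop :=
  exists delta : R, 0 < delta < 1 /\ forall n : nat, beta (2 * n)%nat >= delta * beta n.

From Stdlib Require Import Reals.
From Coquelicot Require Import Coquelicot.
Open Scope R_scope.
From Stdlib Require Import Lra Lia Psatz Classical ClassicalEpsilon.

(* Suppose beta fails Delta_2 and write [w_k = 1/beta_k]: positive, nondecreasing, and
   [sum x^k w_k < oo] for [0 <= x < 1] by the liminf hypothesis.  Failure of Delta_2 gives
   arbitrarily large [n] with [w_n <= eps w_(2n)].  For such [n], a rate [t] with
   [exp(-t)^n = p] small and [U] large, the block mass [T = sum_(n<=k<=U) exp(-t)^(2k) w_k]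
   dominates the whole series [sum_k r^(2k) w_k], where [r = (1-t)/(1+t)] satisfies
   [r^2 <= exp(-t)^3] and [I1(-r) = exp(-t)] ([block_estimate], [good_block_exists]).
   Choosing separated good blocks of every index [j] (with [S_j <= 4^-j T_j]), the test
   function [f = sum_j c_j sum_(k in block j) y_j^k w_k z^k] with [c_j^2 T_j = 2^-j] has
   squared norm [sum_j 2^-j <= 2].  If [g = f o I1] were in H^2(beta), then at [z = -r_j]
   the value [g(-r_j) = f(y_j) >= c_j T_j] would be at most [(||g||^2 S_j)^(1/2)] by
   Cauchy-Schwarz, whence [2^-j <= ||g||^2 4^-j] for all [j], which is absurd. *)

Lemma sum_n_m_nonneg (g : nat -> R) (a b : nat) :
  (forall k, 0 <= g k) -> 0 <= sum_n_m g a b.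
Proof.
  intros Hg.
  rewrite <- (Rmult_0_r (INR (S b - a))), <- sum_n_m_const.
  apply sum_n_m_le; exact Hg.
Qed.

Lemma sum_n_m_le_loc (f g : nat -> R) (a b : nat) :
  (forall k, (a <= k <= b)%nat -> f k <= g k) -> sum_n_m f a b <= sum_n_m g a b.
Proof.
  intros Hfg.
  set (h := fun k => if andb (Nat.leb a k) (Nat.leb k b) then f k else g k).
  assert (Hfh : sum_n_m f a b = sum_n_m h a b).
  { apply sum_n_m_ext_loc; intros k Hk; unfold h.
    destruct (Nat.leb_spec a k), (Nat.leb_spec k b); simpl; auto; lia. }
  rewrite Hfh; apply sum_n_m_le; intros k; unfold h.
  destruct (Nat.leb_spec a k), (Nat.leb_spec k b); simpl; try lra; apply Hfg; lia.
Qed.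

Lemma sum_n_m_subrange (g : nat -> R) (a b a' b' : nat) :
  (forall k, 0 <= g k) -> (a' <= a)%nat -> (b <= b')%nat ->
  sum_n_m g a b <= sum_n_m g a' b'.
Proof.
  intros Hg Ha Hb.
  destruct (Nat.lt_ge_cases b a) as [Hba | Hab].
  { rewrite sum_n_m_zero by exact Hba; apply sum_n_m_nonneg, Hg. }
  rewrite (sum_n_m_Chasles g a' b b') by lia.
  pose proof (sum_n_m_nonneg g (S b) b' Hg).
  destruct a as [|a0].
  - replace a' with 0%nat by lia. unfold plus; simpl; lra.
  - rewrite (sum_n_m_Chasles g a' a0 b) by lia.
    pose proof (sum_n_m_nonneg g a' a0 Hg). unfold plus; simpl; lra.
Qed.

Lemma sum_n_zero (e : nat -> R) (N : nat) :
  (forall i, (i <= N)%nat -> e i = 0) -> sum_n e N = 0.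
Proof.
  intros He; unfold sum_n.
  rewrite (sum_n_m_ext_loc e (fun _ => zero)) by (intros i Hi; apply He; lia).
  exact (sum_n_m_const_zero (G := R_AbelianMonoid) 0 N).
Qed.

Lemma sum_n_single (e : nat -> R) (j N : nat) :
  (j <= N)%nat -> (forall i, (i <= N)%nat -> i <> j -> e i = 0) -> sum_n e N = e j.
Proof.
  induction N as [|N IH]; intros HjN He.
  - rewrite sum_O; f_equal; lia.
  - rewrite sum_Sn; unfold plus; simpl.
    destruct (Nat.eq_dec j (S N)) as [-> | Hne].
    + rewrite sum_n_zero by (intros i Hi; apply He; lia). lra.
    + rewrite IH, (He (S N)) by (try lia; intros i Hi; apply He; lia). lra.
Qed.

Lemma sum_n_le_Series (a : nat -> R) (N : nat) :
  (forall k, 0 <= a k) -> ex_series a -> sum_n a N <= Series a.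
Proof.
  intros Ha Hex.
  change (Rbar_le (sum_n a N) (Series a)).
  apply (is_lim_seq_le_loc (fun _ => sum_n a N) (sum_n a)); [| apply is_lim_seq_const
    | exact (Series_correct a Hex)].
  exists N; intros n Hn; unfold sum_n; apply sum_n_m_subrange; auto.
Qed.

Lemma Series_le_partial (a : nat -> R) (eta : R) (M : nat) :
  ex_series a -> 0 < eta -> exists U, (M <= U)%nat /\ Series a <= sum_n a U + eta.
Proof.
  intros Hex Heta.
  assert (Hl : is_lim_seq (sum_n a) (Series a)) by exact (Series_correct a Hex).
  apply is_lim_seq_spec in Hl.
  destruct (Hl (mkposreal eta Heta)) as [N HN].
  exists (Nat.max M N); split; [lia |].
  specialize (HN (Nat.max M N) ltac:(lia)); simpl in HN.
  apply Rabs_def2 in HN; lra.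
Qed.

Lemma ex_series_nonneg_bounded (a : nat -> R) (M : R) :
  (forall k, 0 <= a k) -> (forall N, sum_n a N <= M) -> ex_series a.
Proof.
  intros Ha HM.
  destruct (ex_finite_lim_seq_incr (sum_n a) M) as [l Hl]; [| exact HM | now exists l].
  intros n; rewrite sum_Sn; unfold plus; simpl; specialize (Ha (S n)); lra.
Qed.

Lemma fst_sum_n (u : nat -> C) (N : nat) :
  fst (sum_n (G := C_AbelianMonoid) u N) = sum_n (fun k => fst (u k)) N.
Proof.
  induction N as [|N IH]; [now rewrite !sum_O |].
  rewrite !sum_Sn; simpl; now rewrite <- IH.
Qed.

Lemma is_lim_Cmod_partial_sums (u : nat -> C) (v : C) :
  is_series (K := C_AbsRing) (V := C_NormedModule) u v ->
  is_lim_seq (fun N => Cmod (sum_n (G := C_AbelianMonoid) u N)) (Cmod v).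
Proof.
  intros Hs.
  exact (filterlim_comp _ _ _ (sum_n u) norm eventually (locally v) (locally (norm v))
           Hs (filterlim_norm v)).
Qed.

Lemma Cmod_series_le (u : nat -> C) (v : C) (M : R) :
  is_series (K := C_AbsRing) (V := C_NormedModule) u v ->
  (forall N, sum_n (fun k => Cmod (u k)) N <= M) -> Cmod v <= M.
Proof.
  intros Hs HM.
  change (Rbar_le (Cmod v) M).
  apply (is_lim_seq_le (fun N => Cmod (sum_n (G := C_AbelianMonoid) u N)) (fun _ => M));
    [intros N | exact (is_lim_Cmod_partial_sums u v Hs) | apply is_lim_seq_const].
  eapply Rle_trans; [| apply (HM N)].
  exact (norm_sum_n_m (K := C_AbsRing) (V := C_NormedModule) u 0 N).
Qed.

Lemma Cmod_series_ge (u : nat -> C) (v : C) (L : R) (N0 : nat) :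
  is_series (K := C_AbsRing) (V := C_NormedModule) u v ->
  (forall N, (N0 <= N)%nat -> L <= sum_n (fun k => fst (u k)) N) -> L <= Cmod v.
Proof.
  intros Hs HL.
  change (Rbar_le L (Cmod v)).
  apply (is_lim_seq_le_loc (fun _ => L) (fun N => Cmod (sum_n (G := C_AbelianMonoid) u N)));
    [| apply is_lim_seq_const | exact (is_lim_Cmod_partial_sums u v Hs)].
  exists N0; intros N HN.
  eapply Rle_trans; [apply (HL N HN) |].
  rewrite <- fst_sum_n; eapply Rle_trans; [apply Rle_abs | apply re_le_Cmod].
Qed.

Lemma Cpow_RtoC (y : R) (k : nat) : Cpow (RtoC y) k = RtoC (y ^ k).
Proof.
  induction k as [|k IH]; simpl; [reflexivity |].
  rewrite IH; unfold Cmult, RtoC; simpl; f_equal; ring.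
Qed.

Lemma pow_le_one (y : R) (k : nat) : 0 <= y <= 1 -> y ^ k <= 1.
Proof.
  intros Hy; induction k as [|k IH]; simpl; [lra |].
  pose proof (pow_le y k (proj1 Hy)); nra.
Qed.

Lemma pow_antitone (y : R) (m k : nat) : 0 <= y <= 1 -> (m <= k)%nat -> y ^ k <= y ^ m.
Proof.
  intros Hy Hmk.
  replace k with (m + (k - m))%nat by lia; rewrite pow_add.
  pose proof (pow_le y m (proj1 Hy)); pose proof (pow_le_one y (k - m) Hy); nra.
Qed.

Lemma exp_pow (a : R) (n : nat) : exp a ^ n = exp (INR n * a).
Proof.
  induction n as [|n IH]; simpl pow; [now rewrite Rmult_0_l, exp_0 |].
  rewrite IH, <- exp_plus, S_INR; f_equal; ring.
Qed.

(* The radius [r] such that [I1 (-r) = exp (-t)]; see [I1_at_radius]. *)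
Definition radius (t : R) : R := (1 - t) / (1 + t).

Lemma I1_at_radius (t : R) : 0 < t < 1 -> I1 (RtoC (- radius t)) = RtoC (exp (- t)).
Proof.
  intros Ht; unfold I1, Cexp, radius.
  set (w := Copp (Cdiv (Cplus 1 (RtoC (- ((1 - t) / (1 + t)))))
                       (Cminus 1 (RtoC (- ((1 - t) / (1 + t))))))).
  assert (Hre : fst w = - t) by (unfold w; simpl; field; lra).
  assert (Him : snd w = 0) by (unfold w; simpl; field; lra).
  rewrite Hre, Him, cos_0, sin_0; unfold RtoC; f_equal; ring.
Qed.

Lemma radius_range (t : R) : 0 < t < 1 -> 0 < radius t < 1.
Proof.
  intros Ht; unfold radius; split; [apply Rdiv_lt_0_compat; lra |].
  apply Rmult_lt_reg_r with (1 + t); [lra |].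
  unfold Rdiv; rewrite Rmult_assoc, Rinv_l by lra; lra.
Qed.

(* This is what makes the value at [-radius t] of a function in H^2(beta) small
   compared with the value of the test function at [exp (-t)]. *)
Lemma radius_sq_le (t : R) : 0 < t <= 1/3 ->
  0 < radius t /\ radius t ^ 2 <= exp (- t) ^ 3.
Proof.
  intros Ht; unfold radius.
  assert (Hr : 0 < (1 - t) / (1 + t)) by (apply Rdiv_lt_0_compat; lra).
  split; [exact Hr |].
  assert (Hlin : (1 - t) / (1 + t) <= exp (- (3/2) * t)).
  { replace ((1 - t) / (1 + t)) with (1 + (- (2 * t / (1 + t)))) by (field; lra).
    eapply Rle_trans; [apply exp_ineq1_le |].
    assert (Hle : - (2 * t / (1 + t)) <= - (3/2) * t).
    { apply Ropp_le_cancel; rewrite Ropp_involutive.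
      apply Rmult_le_reg_r with (1 + t); [lra |].
      unfold Rdiv; rewrite Rmult_assoc, Rinv_l by lra; nra. }
    destruct Hle as [Hlt | ->]; [left; now apply exp_increasing | lra]. }
  replace (exp (- t) ^ 3) with (exp (- (3/2) * t) ^ 2) by (rewrite !exp_pow; f_equal; simpl; field).
  apply pow_incr; lra.
Qed.

(* Arithmetic-geometric mean inequality with a free parameter [la]; it is the
   termwise form of the Cauchy-Schwarz inequality in H^2(beta). *)
Lemma amgm_weighted (X Y b la : R) : 0 < b -> 0 < la ->
  X * Y <= (X ^ 2 * b * / la + la * Y ^ 2 * / b) * / 2.
Proof.
  intros Hb Hla.
  assert (E : (X ^ 2 * b * / la + la * Y ^ 2 * / b) * / 2 - X * Y
              = (X * b - la * Y) ^ 2 * / (2 * la * b)) by (field; lra).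
  assert (0 <= (X * b - la * Y) ^ 2 * / (2 * la * b)).
  { apply Rmult_le_pos; [apply pow2_ge_0 | left; apply Rinv_0_lt_compat; nra]. }
  lra.
Qed.

Lemma antitone_of_step (beta : nat -> R) : (forall n, beta (S n) <= beta n) ->
  forall m n, (m <= n)%nat -> beta n <= beta m.
Proof.
  intros Hstep m n Hmn; induction Hmn as [| n _ IH]; [lra | specialize (Hstep n); lra].
Qed.

(* If [liminf beta_n^(1/n) >= 1], then [sum x^k / beta_k] converges for [0 <= x < 1]:
   beta_k eventually exceeds [rho^k] for any [rho < 1]. *)
Lemma geometric_summable (beta : nat -> R) : (forall n, 0 < beta n) ->
  Rbar_le (Finite 1) (LimInf_seq (fun n => Rpower (beta n) (/ INR n))) ->
  forall x, 0 <= x < 1 -> ex_series (fun k => x ^ k * / beta k).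
Proof.
  intros Hpos Hli x Hx.
  set (rho := (1 + x) / 2).
  assert (Hrho : 0 < rho < 1) by (unfold rho; lra).
  assert (Hroot : exists N, forall k, (N <= k)%nat -> rho < Rpower (beta k) (/ INR k)).
  { destruct (ex_LimInf_seq (fun n => Rpower (beta n) (/ INR n))) as [l Hl].
    rewrite (is_LimInf_seq_unique _ l Hl) in Hli.
    destruct l as [l0 | |]; simpl in Hli, Hl; [| | contradiction].
    - destruct (Hl (mkposreal (1 - rho) ltac:(lra))) as [_ [N HN]].
      exists N; intros k Hk; specialize (HN k Hk); simpl in HN; lra.
    - destruct (Hl rho) as [N HN]; now exists N. }
  destruct Hroot as [N HN].
  assert (Hpow : forall k, (S N <= k)%nat -> rho ^ k < beta k).
  { intros k Hk.
    assert (HkR : 0 < INR k) by (apply lt_0_INR; lia).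
    rewrite <- (Rpower_pow k rho) by lra.
    replace (beta k) with (Rpower (Rpower (beta k) (/ INR k)) (INR k))
      by (rewrite Rpower_mult, Rinv_l by lra; apply Rpower_1, Hpos).
    apply Rlt_Rpower_l; [exact HkR | split; [lra | apply HN; lia]]. }
  apply (proj2 (ex_series_incr_n _ (S N))).
  apply (ex_series_le (K := R_AbsRing) (V := R_CompleteNormedModule) _
           (fun k => (x / rho) ^ (S N + k))).
  - intros k; change (Rabs (x ^ (S N + k) * / beta (S N + k)%nat) <= (x / rho) ^ (S N + k)).
    specialize (Hpow (S N + k)%nat ltac:(lia)).
    pose proof (Hpos (S N + k)%nat).
    pose proof (pow_lt rho (S N + k) (proj1 Hrho)).
    pose proof (pow_le x (S N + k) (proj1 Hx)).
    rewrite Rabs_pos_eq by (apply Rmult_le_pos; [lra | left; now apply Rinv_0_lt_compat]).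
    unfold Rdiv; rewrite Rpow_mult_distr, pow_inv.
    apply Rmult_le_compat_l; [lra | left; apply Rinv_lt_contravar; nra].
  - apply (ex_series_incr_n (fun k => (x / rho) ^ k) (S N)), ex_series_geom.
    rewrite Rabs_pos_eq by (apply Rdiv_le_0_compat; lra).
    apply Rmult_lt_reg_r with rho; [lra |].
    unfold Rdiv; rewrite Rmult_assoc, Rinv_l by lra; unfold rho; lra.
Qed.

Lemma not_Delta2_small_ratio (beta : nat -> R) :
  (forall n, 0 < beta n) -> (forall n, beta (S n) <= beta n) -> ~ Delta2 beta ->
  forall eps, 0 < eps -> forall M, exists n, (M <= n)%nat /\ beta (2 * n)%nat <= eps * beta n.
Proof.
  intros Hpos Hstep HnD eps Heps M.
  apply NNPP; intros Hno; apply HnD.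
  assert (Hlarge : forall n, (M <= n)%nat -> eps * beta n < beta (2 * n)%nat).
  { intros n Hn; apply Rnot_le_lt; intros Hle; apply Hno; now exists n. }
  pose proof (Hpos 0%nat); pose proof (Hpos (2 * M)%nat).
  set (d := Rmin (Rmin eps (beta (2 * M)%nat / beta 0%nat)) (1/2)).
  assert (Hd_eps : d <= eps) by (unfold d; eapply Rle_trans; [apply Rmin_l | apply Rmin_l]).
  assert (Hd_ratio : d * beta 0%nat <= beta (2 * M)%nat).
  { assert (d <= beta (2 * M)%nat / beta 0%nat)
      by (unfold d; eapply Rle_trans; [apply Rmin_l | apply Rmin_r]).
    apply (Rmult_le_compat_r (beta 0%nat)) in H1; [| lra].
    unfold Rdiv in H1; rewrite Rmult_assoc, Rinv_l in H1 by lra; lra. }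
  assert (Hd_half : d <= 1/2) by apply Rmin_r.
  assert (Hd_pos : 0 < d) by (unfold d; repeat apply Rmin_pos; try apply Rdiv_lt_0_compat; lra).
  exists d; split; [lra |]; intros n; apply Rle_ge.
  pose proof (Hpos n).
  destruct (Compare_dec.le_lt_dec M n) as [Hn | Hn].
  - specialize (Hlarge n Hn); nra.
  - assert (beta (2 * M)%nat <= beta (2 * n)%nat) by (apply antitone_of_step; auto; lia).
    assert (beta n <= beta 0%nat) by (apply antitone_of_step; auto; lia).
    nra.
Qed.

Section BlockEstimate.

(* Weights playing the role of [1 / beta_k]: positive, nondecreasing, and summable
   against every geometric sequence of ratio less than 1. *)
Variable w : nat -> R.
Hypothesis w_pos : forall k, 0 < w k.
Hypothesis w_mono : forall m k, (m <= k)%nat -> w m <= w k.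
Hypothesis w_geom : forall x, 0 <= x < 1 -> ex_series (fun k => x ^ k * w k).

(* The squared norm of the block [sum_(n <= k <= U) y^k w_k z^k] in H^2(beta). *)
Definition block_mass (y : R) (n U : nat) : R := sum_n_m (fun k => (y ^ 2) ^ k * w k) n U.

Variables (y : R) (n : nat).
Hypothesis y_range : 0 < y < 1.
Hypothesis n_pos : (1 <= n)%nat.

Lemma block_term_nonneg (x : R) (k : nat) : 0 <= x -> 0 <= x ^ k * w k.
Proof. intros Hx; apply Rmult_le_pos; [now apply pow_le | left; apply w_pos]. Qed.

Lemma head_le : sum_n_m (fun k => (y ^ 3) ^ k * w k) 0 (pred n) <= INR n * w n.
Proof.
  apply Rle_trans with (sum_n_m (fun _ => w n) 0 (pred n)).
  - apply sum_n_m_le_loc; intros k Hk.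
    pose proof (pow_le_one (y ^ 3) k ltac:(split; [apply pow_le | apply pow_le_one]; lra)).
    pose proof (pow_le (y ^ 3) k ltac:(apply pow_le; lra)).
    pose proof (w_mono k n ltac:(lia)); pose proof (w_pos k); nra.
  - rewrite sum_n_m_const; replace (S (pred n) - 0)%nat with n by lia; lra.
Qed.

(* On the block, [y^(3k) = y^k y^(2k) <= y^n y^(2k)]. *)
Lemma middle_le (U : nat) :
  sum_n_m (fun k => (y ^ 3) ^ k * w k) n U <= y ^ n * block_mass y n U.
Proof.
  unfold block_mass; rewrite <- (sum_n_m_mult_l (K := R_Ring)).
  apply sum_n_m_le_loc; intros k Hk; change (mult (y ^ n) ((y ^ 2) ^ k * w k))
    with (y ^ n * ((y ^ 2) ^ k * w k)).
  rewrite <- !pow_mult; replace (3 * k)%nat with (k + 2 * k)%nat by lia; rewrite pow_add.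
  pose proof (pow_antitone y n k ltac:(lra) ltac:(lia)).
  assert (0 <= y ^ (2 * k) * w k)
    by (apply Rmult_le_pos; [apply pow_le; lra | left; apply w_pos]).
  nra.
Qed.

(* The indices [2n <= k < 3n] alone give the block mass at least [n y^(6n) w_(2n)]. *)
Lemma block_mass_ge (U : nat) : (3 * n <= U)%nat ->
  INR n * ((y ^ n) ^ 6 * w (2 * n)%nat) <= block_mass y n U.
Proof.
  intros HU.
  apply Rle_trans with (sum_n_m (fun k => (y ^ 2) ^ k * w k) (2 * n) (pred (3 * n))).
  - apply Rle_trans with (sum_n_m (fun _ => (y ^ n) ^ 6 * w (2 * n)%nat) (2 * n) (pred (3 * n))).
    + rewrite sum_n_m_const; replace (S (pred (3 * n)) - 2 * n)%nat with n by lia; lra.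
    + apply sum_n_m_le_loc; intros k Hk.
      assert (Hpow : (y ^ n) ^ 6 <= (y ^ 2) ^ k)
        by (rewrite <- !pow_mult; apply pow_antitone; lra || lia).
      pose proof (w_mono (2 * n) k ltac:(lia)).
      pose proof (pow_le (y ^ n) 6 ltac:(apply pow_le; lra)). pose proof (w_pos (2 * n)%nat). nra.
  - apply sum_n_m_subrange; [intros k; apply block_term_nonneg, pow_le | |]; lra || lia.
Qed.

Lemma block_estimate (eps : R) (M : nat) :
  0 < eps -> w n <= eps * w (2 * n)%nat ->
  exists U, (M <= U)%nat /\ (n <= U)%nat /\ 0 < block_mass y n U /\
    forall x, 0 <= x <= y ^ 3 ->
      Series (fun k => x ^ k * w k) <= (eps / (y ^ n) ^ 6 + 2 * y ^ n) * block_mass y n U.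
Proof.
  (* With [A_k = y^(3k) w_k] and [T] the block mass:
     [Series x <= Series A <= sum_(k<n) A_k + sum_(n<=k<=U) A_k + eta
                           <= (eps/p^6) T + p T + p T]. *)
  intros Heps Hsmall.
  set (p := y ^ n).
  assert (Hp : 0 < p) by (apply pow_lt; lra).
  assert (Hp6 : 0 < p ^ 6) by (apply pow_lt; lra).
  assert (Hy3 : 0 <= y ^ 3 < 1) by exact (pow_lt_1_compat y 3 ltac:(lra) ltac:(lia)).
  set (A := fun k => (y ^ 3) ^ k * w k).
  set (first_term := (y ^ 2) ^ n * w n).
  assert (Hfirst : 0 < first_term)
    by (apply Rmult_lt_0_compat; [apply pow_lt, pow_lt | apply w_pos]; lra).
  destruct (Series_le_partial A (p * first_term) (Nat.max M (3 * n)) (w_geom _ Hy3)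
              ltac:(now apply Rmult_lt_0_compat)) as [U [HU Htail]].
  assert (HmassU : first_term <= block_mass y n U).
  { unfold block_mass, first_term.
    rewrite <- (sum_n_n (G := R_AbelianMonoid) (fun k => (y ^ 2) ^ k * w k) n).
    apply sum_n_m_subrange; [intros k; apply block_term_nonneg, pow_le | |]; lra || lia. }
  exists U; split; [lia | split; [lia | split; [lra |]]].
  intros x Hx.
  assert (HAU : sum_n A U = sum_n_m A 0 (pred n) + sum_n_m A n U).
  { unfold sum_n; rewrite (sum_n_m_Chasles A 0 (pred n) U) by lia.
    now replace (S (pred n)) with n by lia. }
  pose proof (middle_le U) as Hmid; fold A p in Hmid.
  pose proof (block_mass_ge U ltac:(lia)) as Hmass; fold p in Hmass.
  assert (Hhead : INR n * w n <= eps / p ^ 6 * block_mass y n U).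
  { apply Rle_trans with (eps / p ^ 6 * (INR n * (p ^ 6 * w (2 * n)%nat))).
    - replace (eps / p ^ 6 * (INR n * (p ^ 6 * w (2 * n)%nat)))
        with (INR n * (eps * w (2 * n)%nat)) by (field; lra).
      apply Rmult_le_compat_l; [apply pos_INR | exact Hsmall].
    - apply Rmult_le_compat_l; [apply Rdiv_le_0_compat; lra | exact Hmass]. }
  assert (Hx_le : Series (fun k => x ^ k * w k) <= Series A).
  { apply Series_le; [| apply w_geom; lra]; intros k; split; [apply block_term_nonneg; lra |].
    apply Rmult_le_compat_r; [left; apply w_pos | apply pow_incr; lra]. }
  pose proof head_le as Hhead_sum; fold A in Hhead_sum.
  assert (p * first_term <= p * block_mass y n U) by (apply Rmult_le_compat_l; lra).
  lra.
Qed.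

End BlockEstimate.

(* Parameters of the [j]-th block: on a block starting at [n], the test function uses
   the point [y = exp (- rate j n)], chosen so that [y ^ n = decay j = 4^-(j+1)]. *)
Definition decay (j : nat) : R := (/ 4) ^ S j.
Definition rate (j n : nat) : R := - ln (decay j) / INR n.

Lemma decay_range (j : nat) : 0 < decay j < 1.
Proof.
  unfold decay; split; [apply pow_lt; lra |].
  simpl; pose proof (pow_le_one (/ 4) j ltac:(lra)); pose proof (pow_lt (/ 4) j ltac:(lra)); nra.
Qed.

Lemma rate_pow (j n : nat) : (1 <= n)%nat -> exp (- rate j n) ^ n = decay j.
Proof.
  intros Hn; pose proof (decay_range j).
  assert (1 <= INR n) by (change 1 with (INR 1); now apply le_INR).
  rewrite exp_pow; unfold rate.
  replace (INR n * - (- ln (decay j) / INR n)) with (ln (decay j)) by (field; lra).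
  apply exp_ln; lra.
Qed.

Definition good_block (beta : nat -> R) (j n U : nat) : Prop :=
  (n <= U)%nat /\ 0 < rate j n < 1 /\
  0 < block_mass (fun k => / beta k) (exp (- rate j n)) n U /\
  Series (fun k => (radius (rate j n) ^ 2) ^ k * / beta k)
    <= (/ 4) ^ j * block_mass (fun k => / beta k) (exp (- rate j n)) n U.

Section GoodBlocks.

Variable beta : nat -> R.
Hypothesis beta_pos : forall n, 0 < beta n.
Hypothesis beta_step : forall n, beta (S n) <= beta n.
Hypothesis beta_liminf : Rbar_le (Finite 1) (LimInf_seq (fun n => Rpower (beta n) (/ INR n))).
Hypothesis beta_not_Delta2 : ~ Delta2 beta.

(* Without Delta_2, good blocks of every index start arbitrarily far out: take [n] large
   (so that the rate is at most 1/3) with [beta_(2n) <= eps beta_n] for a tiny [eps]. *)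
Lemma good_block_exists (j M : nat) : exists n U, (M <= n)%nat /\ good_block beta j n U.
Proof.
  pose proof (decay_range j) as Hp; set (p := decay j) in *.
  assert (Hlnp : ln p < 0) by (rewrite <- ln_1; apply ln_increasing; lra).
  destruct (INR_archimed 1 (-3 * ln p)) as [K HK]; [lra |].
  set (eps := p ^ 6 * (/ 4) ^ j / 2).
  assert (Heps : 0 < eps).
  { pose proof (pow_lt p 6 ltac:(lra)); pose proof (pow_lt (/ 4) j ltac:(lra)).
    unfold eps; apply Rdiv_lt_0_compat; nra. }
  destruct (not_Delta2_small_ratio beta beta_pos beta_step beta_not_Delta2 eps Heps
              (Nat.max M (Nat.max K 1))) as [n [Hn Hratio]].
  assert (HnK : INR K <= INR n) by (apply le_INR; lia).
  assert (Hn1 : 1 <= INR n) by (change 1 with (INR 1); apply le_INR; lia).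
  assert (Ht : 0 < rate j n <= 1/3).
  { unfold rate; fold p; split; [apply Rdiv_lt_0_compat; lra |].
    apply Rmult_le_reg_r with (INR n); [lra |].
    unfold Rdiv; rewrite Rmult_assoc, Rinv_l by lra; lra. }
  assert (Hw : / beta n <= eps * / beta (2 * n)%nat).
  { pose proof (beta_pos n); pose proof (beta_pos (2 * n)%nat).
    apply Rmult_le_reg_r with (beta n * beta (2 * n)%nat); [nra |].
    field_simplify; lra. }
  assert (Hy : 0 < exp (- rate j n) < 1)
    by (split; [apply exp_pos | rewrite <- exp_0; apply exp_increasing; lra]).
  destruct (block_estimate (fun k => / beta k)
              (fun k => Rinv_0_lt_compat _ (beta_pos k))
              (fun m k Hmk => Rinv_le_contravar _ _ (beta_pos k)
                                (antitone_of_step beta beta_step m k Hmk))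
              (geometric_summable beta beta_pos beta_liminf)
              (exp (- rate j n)) n Hy ltac:(lia) eps M Heps Hw)
    as [U [_ [HnU [Hmass Hseries]]]].
  exists n, U; split; [lia |]; split; [exact HnU | split; [lra | split; [exact Hmass |]]].
  destruct (radius_sq_le (rate j n) Ht) as [Hr Hr2].
  rewrite rate_pow in Hseries by lia; fold p in Hseries.
  replace ((/ 4) ^ j) with (eps / p ^ 6 + 2 * p)
    by (unfold eps, p, decay; simpl; field; apply pow_nonzero; lra).
  apply Hseries; split; [apply pow_le; lra | exact Hr2].
Qed.

Lemma good_block_sequence : exists nb ub : nat -> nat,
  (forall j, good_block beta j (nb j) (ub j)) /\ (forall j, (ub j < nb (S j))%nat).
Proof.
  assert (Hchoice : forall j M, {nU : nat * nat | (M <= fst nU)%nat /\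
                                                  good_block beta j (fst nU) (snd nU)}).
  { intros j M; apply constructive_indefinite_description.
    destruct (good_block_exists j M) as [n [U HnU]]; now exists (n, U). }
  set (block := fix block (j : nat) : nat * nat :=
         match j with
         | O => proj1_sig (Hchoice O O)
         | S j' => proj1_sig (Hchoice (S j') (S (snd (block j'))))
         end).
  exists (fun j => fst (block j)), (fun j => snd (block j)); split.
  - intros [|j]; simpl; apply (proj2_sig (Hchoice _ _)).
  - intros j; simpl; apply (proj2_sig (Hchoice _ _)).
Qed.

End GoodBlocks.

(* Cauchy-Schwarz bound for point evaluation in H^2(beta), in the form
   [|g(z)| <= (||g||^2 / la + la * sum_k |z|^(2k) / beta_k) / 2] for every [la > 0]. *)
Lemma H2_point_bound (beta : nat -> R) (b : nat -> C) (z v : C) (la : R) :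
  (forall n, 0 < beta n) -> in_H2 beta b ->
  ex_series (fun k => (Cmod z ^ 2) ^ k * / beta k) -> pseries_at b z v -> 0 < la ->
  Cmod v <= (Series (fun k => Cmod (b k) ^ 2 * beta k) * / la
             + Series (fun k => (Cmod z ^ 2) ^ k * / beta k) * la) * / 2.
Proof.
  intros Hpos Hb Hz Hv Hla.
  set (h := fun k => (Cmod (b k) ^ 2 * beta k * / la + (Cmod z ^ 2) ^ k * / beta k * la) * / 2).
  assert (Hh : is_series h ((Series (fun k => Cmod (b k) ^ 2 * beta k) * / la
                            + Series (fun k => (Cmod z ^ 2) ^ k * / beta k) * la) * / 2)).
  { apply is_series_scal_r, (is_series_plus (K := R_AbsRing) (V := R_NormedModule));
      apply is_series_scal_r, Series_correct; assumption. }
  assert (Hh_nonneg : forall k, 0 <= h k).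
  { intros k; pose proof (Hpos k); pose proof (Cmod_ge_0 z); unfold h.
    apply Rmult_le_pos; [| lra]; apply Rplus_le_le_0_compat.
    - apply Rmult_le_pos; [| left; now apply Rinv_0_lt_compat].
      apply Rmult_le_pos; [apply pow2_ge_0 | lra].
    - apply Rmult_le_pos; [| lra]; apply Rmult_le_pos;
        [apply pow_le, pow2_ge_0 | left; now apply Rinv_0_lt_compat]. }
  apply (Cmod_series_le _ v _ Hv); intros N.
  rewrite <- (is_series_unique h _ Hh).
  eapply Rle_trans; [| apply sum_n_le_Series; [exact Hh_nonneg | eexists; exact Hh]].
  unfold sum_n; apply sum_n_m_le; intros k.
  rewrite Cmod_mult, Cmod_pow; unfold h.
  replace ((Cmod z ^ 2) ^ k) with ((Cmod z ^ k) ^ 2) by (rewrite <- !pow_mult; f_equal; lia).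
  pose proof (amgm_weighted (Cmod (b k)) (Cmod z ^ k) (beta k) la (Hpos k) Hla); lra.
Qed.

Section TestFunction.

Variable beta : nat -> R.
Hypothesis beta_pos : forall n, 0 < beta n.
Hypothesis beta_geom : forall x, 0 <= x < 1 -> ex_series (fun k => x ^ k * / beta k).
Variables nb ub : nat -> nat.
Hypothesis blocks_good : forall j, good_block beta j (nb j) (ub j).
Hypothesis blocks_separated : forall j, (ub j < nb (S j))%nat.

Definition in_block (j k : nat) : Prop := (nb j <= k <= ub j)%nat.

Lemma block_nonempty (j : nat) : (nb j <= ub j)%nat.
Proof. apply (blocks_good j). Qed.

Lemma blocks_ordered (i j : nat) : (i < j)%nat -> (ub i < nb j)%nat.
Proof.
  induction j as [|j IH]; intros Hij; [lia |].
  pose proof (blocks_separated j); pose proof (block_nonempty j).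
  destruct (Nat.eq_dec i j) as [-> | Hne]; [lia |].
  specialize (IH ltac:(lia)); lia.
Qed.

Lemma blocks_disjoint (i j k : nat) : in_block i k -> in_block j k -> i = j.
Proof.
  unfold in_block; intros Hi Hj.
  destruct (Nat.lt_total i j) as [H | [H | H]]; auto;
    [pose proof (blocks_ordered i j H) | pose proof (blocks_ordered j i H)]; lia.
Qed.

Lemma block_index_le (j : nat) : (j <= nb j)%nat.
Proof.
  induction j as [|j IH]; [lia |].
  pose proof (blocks_separated j); pose proof (block_nonempty j); lia.
Qed.

Lemma gap_not_in_block (j k : nat) :
  (k < nb j)%nat -> (forall i, (i < j)%nat -> (ub i < k)%nat) -> forall i, ~ in_block i k.
Proof.
  unfold in_block; intros Hk Hprev i Hi.
  destruct (Nat.lt_ge_cases i j) as [Hij | Hji].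
  - specialize (Hprev i Hij); lia.
  - destruct (Nat.eq_dec i j) as [-> | Hne]; [lia |].
    pose proof (blocks_ordered j i ltac:(lia)); pose proof (block_nonempty j); lia.
Qed.

(* Data of the [j]-th block: the point [y_j], the mass [T_j] and the coefficient [c_j]
   normalised by [c_j^2 T_j = 2^-j]. *)
Definition point (j : nat) : R := exp (- rate j (nb j)).
Definition mass (j : nat) : R := block_mass (fun k => / beta k) (point j) (nb j) (ub j).
Definition coef (j : nat) : R := sqrt ((/ 2) ^ j / mass j).

Lemma mass_pos (j : nat) : 0 < mass j.
Proof. apply (blocks_good j). Qed.

Lemma coef_spec (j : nat) : 0 < coef j /\ coef j ^ 2 * mass j = (/ 2) ^ j.
Proof.
  pose proof (mass_pos j); pose proof (pow_lt (/ 2) j ltac:(lra)).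
  assert (0 < (/ 2) ^ j / mass j) by (apply Rdiv_lt_0_compat; auto).
  unfold coef; split; [now apply sqrt_lt_R0 |].
  simpl; rewrite Rmult_1_r, sqrt_sqrt by lra; field; lra.
Qed.

(* The test function [f = sum_j c_j sum_(k in block j) y_j^k / beta_k z^k]; its [k]-th
   coefficient only involves blocks of index [j <= k] since the [j]-th block starts at
   an index at least [j]. *)
Definition block_part (j k : nat) : R :=
  if andb (Nat.leb (nb j) k) (Nat.leb k (ub j)) then coef j * (point j ^ k * / beta k) else 0.
Definition test_coef (k : nat) : R := sum_n (fun j => block_part j k) k.

Lemma block_part_in (j k : nat) :
  in_block j k -> block_part j k = coef j * (point j ^ k * / beta k).
Proof.
  unfold in_block, block_part; intros Hk.
  destruct (Nat.leb_spec (nb j) k), (Nat.leb_spec k (ub j)); simpl; auto; lia.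
Qed.

Lemma block_part_out (j k : nat) : ~ in_block j k -> block_part j k = 0.
Proof.
  unfold in_block, block_part; intros Hk.
  destruct (Nat.leb_spec (nb j) k), (Nat.leb_spec k (ub j)); simpl; auto; lia.
Qed.

Lemma test_coef_in (j k : nat) : in_block j k -> test_coef k = coef j * (point j ^ k * / beta k).
Proof.
  intros Hk; unfold test_coef.
  rewrite (sum_n_single _ j k); [now apply block_part_in | |].
  - pose proof (block_index_le j); unfold in_block in Hk; lia.
  - intros i _ Hne; apply block_part_out; intros Hi; apply Hne; eapply blocks_disjoint; eauto.
Qed.

Lemma test_coef_out (k : nat) : (forall i, ~ in_block i k) -> test_coef k = 0.
Proof. intros Hk; unfold test_coef; apply sum_n_zero; intros i _; now apply block_part_out. Qed.

Lemma test_coef_nonneg (k : nat) : 0 <= test_coef k.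
Proof.
  unfold test_coef, sum_n; apply sum_n_m_nonneg; intros j; unfold block_part.
  destruct (andb _ _); [| lra].
  pose proof (coef_spec j); pose proof (beta_pos k).
  apply Rmult_le_pos; [lra |]; apply Rmult_le_pos;
    [apply pow_le; left; apply exp_pos | left; now apply Rinv_0_lt_compat].
Qed.

Lemma block_norm (j : nat) :
  sum_n_m (fun k => test_coef k ^ 2 * beta k) (nb j) (ub j) = (/ 2) ^ j.
Proof.
  rewrite <- (proj2 (coef_spec j)); unfold mass, block_mass.
  rewrite <- (sum_n_m_mult_l (K := R_Ring)).
  apply sum_n_m_ext_loc; intros k Hk.
  rewrite (test_coef_in j k Hk); change (mult (coef j ^ 2) ((point j ^ 2) ^ k * / beta k))
    with (coef j ^ 2 * ((point j ^ 2) ^ k * / beta k)).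
  rewrite <- pow_mult, Nat.mul_comm, pow_mult.
  change (@eq R ((coef j * (point j ^ k * / beta k)) ^ 2 * beta k)
                (coef j ^ 2 * ((point j ^ k) ^ 2 * / beta k))).
  pose proof (beta_pos k); field; lra.
Qed.

Lemma gap_and_block_norm (j a : nat) :
  (a <= nb j)%nat -> (forall i, (i < j)%nat -> (ub i < a)%nat) ->
  sum_n_m (fun k => test_coef k ^ 2 * beta k) a (ub j) = (/ 2) ^ j.
Proof.
  intros Ha Hprev.
  destruct (Nat.eq_dec a (nb j)) as [-> | Hne]; [apply block_norm |].
  rewrite (sum_n_m_Chasles _ a (pred (nb j)) (ub j)) by (pose proof (block_nonempty j); lia).
  replace (S (pred (nb j))) with (nb j) by lia.
  rewrite block_norm, (sum_n_m_ext_loc _ (fun _ => zero)).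
  - rewrite sum_n_m_const_zero; apply plus_zero_l.
  - intros k Hk; rewrite test_coef_out; [change (@eq R (0 ^ 2 * beta k) 0); ring |].
    apply (gap_not_in_block j); [lia | intros i Hi; specialize (Hprev i Hi); lia].
Qed.

Lemma test_norm_partial (j : nat) :
  sum_n (fun k => test_coef k ^ 2 * beta k) (ub j) = sum_n (fun i => (/ 2) ^ i) j.
Proof.
  induction j as [|j IH].
  - rewrite sum_O; apply gap_and_block_norm; lia.
  - rewrite sum_Sn, <- IH; unfold sum_n.
    rewrite (sum_n_m_Chasles _ 0 (ub j) (ub (S j)))
      by (pose proof (blocks_separated j); pose proof (block_nonempty (S j)); lia).
    f_equal; apply gap_and_block_norm; [apply blocks_separated |].
    intros i Hi; destruct (Nat.eq_dec i j) as [-> | Hne]; [lia |].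
    pose proof (blocks_ordered i j ltac:(lia)); pose proof (block_nonempty j); lia.
Qed.

Lemma test_in_H2 : in_H2 beta (fun k => RtoC (test_coef k)).
Proof.
  unfold in_H2; apply (ex_series_nonneg_bounded _ 2).
  - intros k; apply Rmult_le_pos; [apply pow2_ge_0 | left; apply beta_pos].
  - intros N.
    rewrite (sum_n_ext _ (fun k => test_coef k ^ 2 * beta k))
      by (intros k; now rewrite Cmod_R, pow2_abs).
    assert (Hgeom : sum_n (fun i => (/ 2) ^ i) N <= 2).
    { apply Rle_trans with (Series (fun i => (/ 2) ^ i)).
      - apply sum_n_le_Series; [intros i; apply pow_le; lra |].
        apply ex_series_geom; rewrite Rabs_pos_eq; lra.
      - rewrite Series_geom by (rewrite Rabs_pos_eq; lra); lra. }
    rewrite <- test_norm_partial in Hgeom.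
    eapply Rle_trans; [| exact Hgeom]; unfold sum_n.
    apply sum_n_m_subrange; [intros k; apply Rmult_le_pos; [apply pow2_ge_0 | left; apply beta_pos]
      | lia |].
    pose proof (block_index_le N); pose proof (block_nonempty N); lia.
Qed.

(* At [y_j] all the terms of [f] are nonnegative, and those of the [j]-th block already
   sum to [c_j T_j]. *)
Lemma test_value_lower (j : nat) (v : C) :
  pseries_at (fun k => RtoC (test_coef k)) (RtoC (point j)) v -> coef j * mass j <= Cmod v.
Proof.
  intros Hv; apply (Cmod_series_ge _ v _ (ub j) Hv); intros N HN.
  rewrite (sum_n_ext _ (fun k => test_coef k * point j ^ k))
    by (intros k; rewrite Cpow_RtoC; simpl; ring).
  unfold mass, block_mass; rewrite <- (sum_n_m_mult_l (K := R_Ring)).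
  apply Rle_trans with (sum_n_m (fun k => test_coef k * point j ^ k) (nb j) (ub j)).
  - right; apply sum_n_m_ext_loc; intros k Hk.
    rewrite (test_coef_in j k Hk); change (mult (coef j) ((point j ^ 2) ^ k * / beta k))
      with (coef j * ((point j ^ 2) ^ k * / beta k)).
    rewrite <- pow_mult, Nat.mul_comm, pow_mult; simpl; ring.
  - unfold sum_n; apply sum_n_m_subrange; [| lia | exact HN].
    intros k; apply Rmult_le_pos; [apply test_coef_nonneg | apply pow_le; left; apply exp_pos].
Qed.

(* Comparing the value [f(y_j) = g(-r_j)] from below (by [test_value_lower]) and from above
   (by Cauchy-Schwarz in H^2(beta) and the good-block estimate) gives
   [2^-j = c_j^2 T_j <= ||g||^2 4^-j]. *)
Lemma block_value_inequality (b : nat -> C) (j : nat) :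
  in_H2 beta b ->
  (forall z, Cmod z < 1 ->
     exists v, pseries_at (fun k => RtoC (test_coef k)) (I1 z) v /\ pseries_at b z v) ->
  (/ 2) ^ j <= Series (fun k => Cmod (b k) ^ 2 * beta k) * (/ 4) ^ j.
Proof.
  intros Hb Hcomp.
  destruct (blocks_good j) as [_ [Ht [_ Hseries]]].
  pose proof (radius_range _ Ht) as Hr.
  set (r := radius (rate j (nb j))) in *.
  assert (Hz : Cmod (RtoC (- r)) = r) by (rewrite Cmod_R, Rabs_Ropp; apply Rabs_pos_eq; lra).
  destruct (Hcomp (RtoC (- r)) ltac:(lra)) as [v [Hfv Hgv]].
  unfold r in Hfv; rewrite (I1_at_radius _ Ht) in Hfv.
  pose proof (test_value_lower j v Hfv) as Hlow.
  destruct (coef_spec j) as [Hc Hc2].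
  set (B := Series (fun k => Cmod (b k) ^ 2 * beta k)) in *.
  set (d := (/ 4) ^ j) in *.
  set (S := Series (fun k => (r ^ 2) ^ k * / beta k)) in *.
  assert (Hd : 0 < d) by (apply pow_lt; lra).
  assert (HS : S <= d * mass j) by exact Hseries.
  assert (Hla : 0 < coef j / d) by (apply Rdiv_lt_0_compat; lra).
  pose proof (H2_point_bound beta b (RtoC (- r)) v (coef j / d) beta_pos Hb) as Hup.
  rewrite Hz in Hup; specialize (Hup (beta_geom (r ^ 2) ltac:(split; [apply pow2_ge_0 | nra]))
                                  Hgv Hla); fold B S in Hup.
  assert (HSc : S * (coef j / d) <= coef j * mass j).
  { apply Rle_trans with (d * mass j * (coef j / d));
      [apply Rmult_le_compat_r; lra | right; field; lra]. }
  assert (HcT : coef j * mass j <= B * d / coef j).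
  { replace (B * d / coef j) with (B * / (coef j / d)) by (field; lra); lra. }
  rewrite <- Hc2.
  apply (Rmult_le_compat_l (coef j)) in HcT; [| lra].
  replace (coef j * (B * d / coef j)) with (B * d) in HcT by (field; lra).
  simpl; lra.
Qed.

Lemma CI1_not_maps_into : ~ CI1_maps_into beta.
Proof.
  intros Hmaps.
  destruct (Hmaps _ test_in_H2) as [b [Hb Hcomp]].
  set (B := Series (fun k => Cmod (b k) ^ 2 * beta k)).
  assert (Hlarge : forall j, 1 <= B * (/ 2) ^ j).
  { intros j; pose proof (block_value_inequality b j Hb Hcomp) as Hj; fold B in Hj.
    pose proof (pow_lt (/ 2) j ltac:(lra)).
    replace ((/ 4) ^ j) with ((/ 2) ^ j * (/ 2) ^ j) in Hj
      by (rewrite <- Rpow_mult_distr; f_equal; field).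
    apply Rmult_le_reg_r with ((/ 2) ^ j); nra. }
  assert (Hlim : is_lim_seq (fun j => B * (/ 2) ^ j) (B * 0)).
  { apply (is_lim_seq_scal_l _ B 0), is_lim_seq_geom; rewrite Rabs_pos_eq; lra. }
  pose proof (is_lim_seq_le _ _ 1 (B * 0) Hlarge (is_lim_seq_const 1) Hlim) as Hle.
  simpl in Hle; lra.
Qed.

End TestFunction.

Theorem mainTheorem20 (beta : nat -> R) :
  (forall n : nat, 0 < beta n) ->
  (forall n : nat, beta (S n) <= beta n) ->
  Rbar_le (Finite 1) (LimInf_seq (fun n => Rpower (beta n) (/ INR n))) ->
  CI1_maps_into beta ->
  Delta2 beta.
Proof.
  intros Hpos Hstep Hliminf Hmaps.
  apply NNPP; intros HnotDelta2.
  destruct (good_block_sequence beta Hpos Hstep Hliminf HnotDelta2) as [nb [ub [Hgood Hsep]]].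
  exact (CI1_not_maps_into beta Hpos (geometric_summable beta Hpos Hliminf) nb ub Hgood Hsep Hmaps).
Qed.
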